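(* Let $n\ge 1$ be an integer and let $U_{6n}=\langle a,b : a^{2n}=b^3=1,\ a^{-1}ba=b^{-1}\rangle$ (a group of order $6n$). Let $\Gamma_{U_{6n}}$ be its non-commuting graph. Then the spectrum of the distance matrix $D(\Gamma_{U_{6n}})$ (eigenvalues counted with multiplicity, multiplicities being added if two of the listed values coincide) consists of: (a) $-2$ with multiplicity $5n-4$; (b) $n-2$ with multiplicity $2$; (c) $(4n-2)+n\sqrt{6}$ and $(4n-2)-n\sqrt{6}$, each with multiplicity $1$.
   Context: For a finite non-abelian group $G$ with centre $Z(G)$, the non-commuting graph $\Gamma_G$ is the simple undirected graph with vertex set $G\setminus Z(G)$, in which two distinct vertices $u,v$ are adjacent if and only if $uv\ne vu$. For a connected graph $H$, $d_{uv}$ denotes the length of a shortest path between vertices $u$ and $v$, and the distance matrix $D(H)$ is the matrix whose $(u,v)$-entry is $d_{uv}$. *)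

From HB Require Import structures.
From mathcomp Require Import all_boot all_order all_algebra all_fingroup all_solvable all_field.
Set Implicit Arguments. Unset Strict Implicit. Unset Printing Implicit Defensive.
Import GRing.Theory Num.Theory.

Local Open Scope group_scope.

Definition ncg_vertices (gT : finGroupType) (G : {group gT}) : {set gT} :=
  G :\: 'Z(G).

(* Adjacency in the non-commuting graph: u v distinct vertices with uv <> vu
   (uv <> vu already forces u <> v). *)
Definition ncg_adj (gT : finGroupType) (G : {group gT}) (u v : gT) : bool :=
  [&& u \in ncg_vertices G, v \in ncg_vertices G & u * v != v * u].

Fixpoint ncg_ball (gT : finGroupType) (G : {group gT}) (u : gT) (k : nat)
  : {set gT} :=
  match k with
  | 0 => [set u]
  | k'.+1 => ncg_ball G u k' :|:
             [set y | [exists x in ncg_ball G u k', ncg_adj G x y]]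
  end.

(* Graph distance d_{uv}: the least k such that v is within k steps of u.
   (Any shortest path has length < #|gT|; for an unreachable v this yields
   #|gT|, a convention irrelevant for connected graphs.) *)
Definition ncg_dist (gT : finGroupType) (G : {group gT}) (u v : gT) : nat :=
  find (fun k => v \in ncg_ball G u k) (iota 0 #|gT|).

Definition ncg_dist_mx (gT : finGroupType) (G : {group gT})
  : 'M[algC]_(#|ncg_vertices G|) :=
  (\matrix_(i, j) (ncg_dist G (enum_val i) (enum_val j))%:R)%R.

(* Every element of U_{6n} is a^i b^j with i < 2n, j < 3, and b^j a^k = a^k b^(j 2^k) where
   2^k = (-1)^k mod 3.  Hence the centre is {a^i : i even}, and the non-central elements
   split into four classes, {a^i b^j : i even, j <> 0} of size 2n and, for each j,
   {a^i b^j : i odd} of size n, such that two elements commute iff they lie in the same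
   class: the non-commuting graph is K_{2n,n,n,n}, with distances 1 across and 2 inside
   the classes.  Its distance matrix D satisfies D + 2 = U V with U the 5n x 4 incidence
   matrix of the classes, and Sylvester's identity t^4 det (t - U V) = t^(5n) det (t - V U)
   reduces the characteristic polynomial to that of a 4 x 4 quotient matrix, namely
   (t - n)^2 (t^2 - 8nt + 10n^2) in t = X + 2. *)

From HB Require Import structures.
From mathcomp Require Import all_boot all_order all_algebra all_fingroup all_solvable all_field.
From mathcomp Require Import ring zify.
Import GRing.Theory Num.Theory.
Set Implicit Arguments.
Unset Strict Implicit.
Unset Printing Implicit Defensive.

Local Open Scope ring_scope.

Lemma det_scalar_sub_mulmxC (R : comNzRingType) m k (U : 'M[R]_(m, k)) (V : 'M[R]_(k, m)) (t : R) :
  t ^+ k * \det (t%:M - U *m V) = t ^+ m * \det (t%:M - V *m U).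
Proof.
pose M := block_mx (t%:M : 'M_m) U V (1%:M : 'M_k).
have M_lfactor : M = block_mx 1%:M U 0 1%:M *m block_mx (t%:M - U *m V) 0 V 1%:M.
  by rewrite mulmx_block ?mul1mx ?mul0mx ?mulmx1 ?addr0 ?add0r subrK.
have M_rfactor : block_mx 1%:M 0 (- V) t%:M *m M = block_mx t%:M U 0 (t%:M - V *m U).
  rewrite mulmx_block ?mul1mx ?mul0mx ?mulmx1 ?addr0 ?add0r mul_mx_scalar mul_scalar_mx.
  by rewrite scalerN addNr mulNmx addrC.
have := congr1 determinant M_rfactor.
rewrite det_mulmx det_lblock det_ublock M_lfactor det_mulmx det_ublock det_lblock.
by rewrite !det1 !mul1r !mulr1 !det_scalar.
Qed.

(* [V *m U] for the factorization [D + 2 = U *m V] through the parts, [s q] being the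
   size of part [q]. *)
Definition quotient_mx {R : nzRingType} {k : nat} (s : 'I_k -> nat) : 'M[R]_k :=
  \matrix_(r, q) (((r == q)%:R + 1) * (s q)%:R).

Section Multipartite.
Variables (R : comNzRingType) (m k : nat) (p : 'I_m -> 'I_k).

Definition multipartite_dist_mx : 'M[R]_m :=
  \matrix_(i, j) (if i == j then 0 else if p i == p j then 2 else 1).

Definition part_size (q : 'I_k) : nat := #|[set i | p i == q]|.

Lemma char_poly_multipartite :
  ('X + 2%:P) ^+ k * char_poly multipartite_dist_mx
  = ('X + 2%:P) ^+ m * char_poly (quotient_mx part_size - 2%:M).
Proof.
pose t : {poly R} := 'X + 2%:P.
pose U : 'M[{poly R}]_(m, k) := \matrix_(i, q) (p i == q)%:R.
pose V : 'M[{poly R}]_(k, m) := \matrix_(q, j) ((p j == q)%:R + 1).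
have sum_delta (F : 'I_k -> {poly R}) i : \sum_q ((p i == q)%:R * F q) = F (p i).
  rewrite (bigD1 (p i)) //= eqxx mul1r big1 ?addr0 // => q /negPf.
  by rewrite eq_sym => ->; rewrite mul0r.
have UV : char_poly_mx multipartite_dist_mx = t%:M - U *m V.
  apply/matrixP => i j; rewrite !mxE; under eq_bigr => q _ do rewrite !mxE.
  rewrite sum_delta /t; have [->|ij] := eqVneq i j.
    by rewrite eqxx /= rmorph0 subr0; ring.
  by rewrite /= !mulr0n; case: eqVneq => _ /=; rewrite ?rmorph_nat ?rmorph1; ring.
have VU : V *m U = map_mx polyC (quotient_mx part_size).
  apply/matrixP => r q; rewrite !mxE rmorphM rmorphD rmorph1 !rmorph_nat /part_size.
  rewrite -sum1_card natr_sum mulr_sumr [RHS]big_mkcond; apply: eq_bigr => j _.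
  rewrite !mxE inE; have [->|pjq] := eqVneq (p j) q; last by rewrite !mulr0.
  by rewrite eq_sym.
rewrite /char_poly UV det_scalar_sub_mulmxC VU; congr (_ * \det _).
apply/matrixP => r q; rewrite !mxE rmorphB /= !rmorphMn /= rmorph1 /t.
by case: (r == q); rewrite ?mulr1n ?mulr0n; ring.
Qed.

Lemma sum_part_size : (\sum_q part_size q)%N = m.
Proof.
rewrite -[RHS]card_ord -sum1_card (partition_big p xpredT) //=.
by apply: eq_bigr => q _; rewrite /part_size -sum1_card; apply: eq_bigl => i; rewrite inE.
Qed.

End Multipartite.

Arguments multipartite_dist_mx {R m k} p.

Lemma det_mx4_2111 (R : comNzRingType) (t N : R) (A : 'M[R]_4) :
  (forall i j : 'I_4, A i j = (if i == j then t else 0)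
     - ((i == j)%:R + 1) * (if j == ord0 then N + N else N)) ->
  \det A = (t - N) ^+ 2 * (t ^+ 2 - 8 * N * t + 10 * N ^+ 2).
Proof.
move=> AE.
rewrite (expand_det_row _ ord0) !big_ord_recl big_ord0 /cofactor.
rewrite !(expand_det_row _ ord0) !big_ord_recl !big_ord0 /cofactor.
rewrite !(expand_det_row _ ord0) !big_ord_recl !big_ord0 /cofactor.
by rewrite !det_mx11 !mxE !AE /=; ring.
Qed.

Lemma char_poly_quotient_mx_2111 (R : comNzRingType) (N : nat) (s : 'I_4 -> nat) :
  (forall q, s q = if q == ord0 then N.*2 else N) ->
  char_poly (quotient_mx s - 2%:M : 'M[R]_4)
  = ('X - (N%:R - 2)%:P) ^+ 2 * (('X - ((4 * N)%:R - 2)%:P) ^+ 2 - (6 * N ^ 2)%:R%:P).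
Proof.
move=> sE; rewrite /char_poly (@det_mx4_2111 _ ('X + 2%:P) N%:R%:P).
  by rewrite !(rmorphB, rmorphM, rmorphXn, rmorph_nat) /=; ring.
move=> i j; rewrite !mxE sE.
by case: (i == j); case: (j == ord0);
  rewrite /= -?addnn ?natrD !(rmorphB, rmorphD, rmorphM, rmorph_nat); ring.
Qed.

Lemma char_poly_multipartite_2111 (R : idomainType) m (p : 'I_m -> 'I_4) N :
  (0 < N)%N -> (forall q, part_size p q = if q == ord0 then N.*2 else N) ->
  char_poly (multipartite_dist_mx p : 'M[R]_m)
  = ('X + 2%:P) ^+ (m - 4) * (('X - (N%:R - 2)%:P) ^+ 2
      * (('X - ((4 * N)%:R - 2)%:P) ^+ 2 - (6 * N ^ 2)%:R%:P)).
Proof.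
move=> N_gt0 sizes.
have m_ge4 : (4 <= m)%N.
  by rewrite -(sum_part_size p) !big_ord_recl big_ord0 !sizes /=; lia.
have t4_neq0 : ('X + 2%:P : {poly R}) ^+ 4 != 0.
  by rewrite expf_neq0 // monic_neq0 // monicXaddC.
apply: (mulfI t4_neq0); rewrite char_poly_multipartite (char_poly_quotient_mx_2111 _ sizes).
by rewrite -{1}(subnK m_ge4) exprD -mulrA mulrCA.
Qed.

(* [3 <= #|gT|] lets the search range [iota 0 #|gT|] of [ncg_dist] reach distance 2. *)
Lemma ncg_dist_partition (gT : finGroupType) (G : {group gT}) (I : eqType) (part : gT -> I) :
  {in ncg_vertices G &, forall u v, (u * v != v * u)%g = (part u != part v)} ->
  {in ncg_vertices G, forall u, exists2 w, w \in ncg_vertices G & part w != part u} ->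
  (3 <= #|gT|)%N ->
  {in ncg_vertices G &, forall u v,
    ncg_dist G u v = if u == v then 0%N else if part u == part v then 2%N else 1%N}.
Proof.
move=> ncommE other_part gT_ge3 u v uV vV.
have adjE : {in ncg_vertices G &, forall x y, ncg_adj G x y = (part x != part y)}.
  by move=> x y xV yV; rewrite /ncg_adj xV yV ncommE.
have ball1 y : (y \in ncg_ball G u 1) = (y == u) || ncg_adj G u y.
  rewrite /= !inE; congr (_ || _); apply/existsP/idP => [[x]|uy].
    by rewrite inE => /andP[/eqP ->].
  by exists u; rewrite inE eqxx.
rewrite /ncg_dist; case: #|gT| gT_ge3 => [|[|[|N]]] // _ /=.
have [<-|vu] := eqVneq v u; first by rewrite set11.
rewrite inE (negPf vu).
have := ball1 v; rewrite /= => ->; rewrite (negPf vu) /= adjE //.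
have [puv|//] := eqVneq (part u) (part v).
suff -> : v \in ncg_ball G u 2 by [].
have [w wV pw] := other_part u uV.
rewrite /= inE; apply/orP; right; rewrite inE; apply/existsP; exists w.
by rewrite ball1 !adjE // -puv (eq_sym (part u)) pw orbT.
Qed.

Lemma part_size_enum_val (T : finType) (A : {set T}) k (f : T -> 'I_k) q :
  part_size (fun i : 'I_#|A| => f (enum_val i)) q = #|[set x in A | f x == q]|.
Proof.
rewrite /part_size -(card_imset _ enum_val_inj); apply: eq_card => x; rewrite [RHS]inE.
apply/imsetP/andP => [[i]|[xA fx]]; first by rewrite inE => fi ->; rewrite enum_valP.
by exists (enum_rank_in xA x); rewrite ?inE enum_rankK_in.
Qed.

Lemma ncg_dist_mx_partition (gT : finGroupType) (G : {group gT}) k (part : gT -> 'I_k) :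
  {in ncg_vertices G &, forall u v, (u * v != v * u)%g = (part u != part v)} ->
  {in ncg_vertices G, forall u, exists2 w, w \in ncg_vertices G & part w != part u} ->
  (3 <= #|gT|)%N ->
  ncg_dist_mx G = multipartite_dist_mx (fun i => part (enum_val i)).
Proof.
move=> ncommE other_part gT_ge3; apply/matrixP => i j.
rewrite !mxE (ncg_dist_partition ncommE other_part gT_ge3) ?enum_valP //.
by rewrite (inj_eq enum_val_inj); case: ifP => // _; case: ifP.
Qed.

Lemma expn2_mod3 k : (2 ^ k = if odd k then 2 else 1 %[mod 3])%N.
Proof. by elim: k => // k IH; rewrite expnS -modnMmr IH /=; case: (odd k). Qed.

Lemma sum_parity n (x y : nat) : (\sum_(i < 2 * n) (if odd i then x else y) = n * (x + y))%N.
Proof.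
elim: n => [|n IH]; first by rewrite big_ord0.
by rewrite mulnSr addn2 !big_ord_recr /= IH oddM /=; lia.
Qed.

Section U6n.
Local Open Scope group_scope.

Variables (gT : finGroupType) (G : {group gT}) (a b : gT) (n : nat).
Hypotheses (n_gt0 : (0 < n)%N) (defG : G :=: <<[set a; b]>>)
  (a_order : a ^+ (2 * n) = 1) (b_order : b ^+ 3 = 1) (conj_b_a : a^-1 * b * a = b^-1)
  (cardG : #|G| = (6 * n)%N).

Lemma expb_mul_expa j k : b ^+ j * a ^+ k = a ^+ k * b ^+ (j * 2 ^ k).
Proof.
have invb : b^-1 = b ^+ 2 by rewrite -[RHS](mulKg b) -expgS b_order mulg1.
have conj_expa k' : b ^ (a ^+ k') = b ^+ (2 ^ k').
  elim: k' => [|k' IH]; first by rewrite conjg1.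
  by rewrite expgSr conjgM IH conjXg conjgE mulgA conj_b_a invb -expgM expnS.
by rewrite conjgC conjXg conj_expa -expgM mulnC.
Qed.

Lemma mul_normal_form i j k l :
  (a ^+ i * b ^+ j) * (a ^+ k * b ^+ l) = a ^+ (i + k) * b ^+ (j * 2 ^ k + l).
Proof. by rewrite mulgA -(mulgA _ _ (a ^+ k)) expb_mul_expa mulgA -expgD -mulgA -expgD. Qed.

Let twice_n_gt0 : (0 < 2 * n)%N. Proof. by rewrite muln_gt0. Qed.

Definition u6_elt (ij : 'I_(2 * n) * 'I_3) : gT := a ^+ ij.1 * b ^+ ij.2.

Definition u6_index (i j : nat) : 'I_(2 * n) * 'I_3 :=
  (Ordinal (ltn_pmod i twice_n_gt0), Ordinal (ltn_pmod j (isT : 0 < 3)%N)).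

Lemma u6_eltE i j : u6_elt (u6_index i j) = a ^+ i * b ^+ j.
Proof. by rewrite /u6_elt /= !expg_mod. Qed.

Lemma u6_elt_in ij : u6_elt ij \in G.
Proof. by rewrite defG groupM ?groupX ?mem_gen // !inE eqxx ?orbT. Qed.

Lemma u6_elt_onto : G \subset u6_elt @: setT.
Proof.
have u6_group : group_set (u6_elt @: setT).
  apply/group_setP; split.
    by apply/imsetP; exists (u6_index 0 0); rewrite ?u6_eltE ?mulg1.
  move=> _ _ /imsetP[[i j] _ ->] /imsetP[[k l] _ ->].
  by apply/imsetP; exists (u6_index (i + k) (j * 2 ^ k + l)); rewrite ?u6_eltE -?mul_normal_form.
rewrite defG (gen_subG _ (Group u6_group)) subUset !sub1set; apply/andP; split.
  by apply/imsetP; exists (u6_index 1 0); rewrite ?u6_eltE ?mulg1.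
by apply/imsetP; exists (u6_index 0 1); rewrite ?u6_eltE ?mul1g.
Qed.

Lemma u6_eltP x : x \in G -> exists ij, x = u6_elt ij.
Proof. by move=> /(subsetP u6_elt_onto) /imsetP[ij _ ->]; exists ij. Qed.

Lemma u6_elt_inj : injective u6_elt.
Proof.
suff /imset_injP inj : #|u6_elt @: setT| == #|[set: 'I_(2 * n) * 'I_3]|.
  by move=> x y /inj; apply; rewrite inE.
rewrite eqn_leq leq_imset_card cardsT card_prod !card_ord /=.
by apply: leq_trans (subset_leq_card u6_elt_onto); rewrite cardG mulnAC.
Qed.

Lemma eq_expb j l : (b ^+ j == b ^+ l) = (j == l %[mod 3])%N.
Proof.
apply/eqP/eqP => [|jl]; last by rewrite -(expg_mod _ b_order) jl expg_mod.
rewrite -(mul1g (b ^+ j)) -(mul1g (b ^+ l)) -(expg0 a) -!u6_eltE.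
by move/u6_elt_inj/(congr1 (fun ij => val ij.2)).
Qed.

Lemma commute_normal_form i j k l :
  ((a ^+ i * b ^+ j) * (a ^+ k * b ^+ l) == (a ^+ k * b ^+ l) * (a ^+ i * b ^+ j))
  = (j * (if odd k then 2 else 1) + l == l * (if odd i then 2 else 1) + j %[mod 3])%N.
Proof.
have expn2_modD x y z : (x * 2 ^ y + z = x * (if odd y then 2 else 1) + z %[mod 3])%N.
  by rewrite -modnDml -modnMmr expn2_mod3 modnMmr modnDml.
by rewrite !mul_normal_form (addnC k) (inj_eq (mulgI _)) eq_expb !expn2_modD.
Qed.

Definition u6_part (ij : 'I_(2 * n) * 'I_3) : 'I_4 :=
  if odd ij.1 then lift ord0 ij.2 else ord0.

Lemma u6_center ij : (u6_elt ij \in 'Z(G)) = ~~ odd ij.1 && (ij.2 == 0 :> nat).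
Proof.
have aE : a = a ^+ 1 * b ^+ 0 by rewrite mulg1.
have bE : b = a ^+ 0 * b ^+ 1 by rewrite mul1g.
case: ij => [[i i_lt] [j j_lt3]]; rewrite /u6_elt /=; apply/centerP/idP => [[_ centr]|].
  have := commute_normal_form i j 1 0; rewrite -aE (centr a) ?eqxx; last first.
    by rewrite defG mem_gen // !inE eqxx.
  have := commute_normal_form i j 0 1; rewrite -bE (centr b) ?eqxx; last first.
    by rewrite defG mem_gen // !inE eqxx orbT.
  move=> /esym + /esym; rewrite muln1 mul1n mul0n addn0.
  by clear centr; case: (odd i); case: j j_lt3 => [|[|[|j]]].
move=> /andP[i_even /eqP j0]; split; first exact: (u6_elt_in (Ordinal _, Ordinal _)).
move=> _ /u6_eltP[[k l] ->]; apply/eqP; rewrite commute_normal_form j0.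
by rewrite /= mul0n add0n addn0 (negPf i_even) muln1.
Qed.

Lemma u6_vertex ij : (u6_elt ij \in ncg_vertices G) = odd ij.1 || (ij.2 != 0 :> nat).
Proof. by rewrite /ncg_vertices inE u6_center u6_elt_in andbT negb_and negbK. Qed.

Lemma u6_commute_part ij kl :
  u6_elt ij \in ncg_vertices G -> u6_elt kl \in ncg_vertices G ->
  (u6_elt ij * u6_elt kl == u6_elt kl * u6_elt ij) = (u6_part ij == u6_part kl).
Proof.
rewrite !u6_vertex /u6_elt /u6_part commute_normal_form.
case: ij kl => [[i ?] [j j_lt3]] [[k ?] [l l_lt3]] /=.
case: (odd i); case: (odd k); rewrite ?(inj_eq lift_inj) -?val_eqE /=;
  by case: j j_lt3 => [|[|[|j]]] //; case: l l_lt3 => [|[|[|l]]].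
Qed.

Definition u6_part_of (x : gT) : 'I_4 :=
  if [pick ij | u6_elt ij == x] is Some ij then u6_part ij else ord0.

Lemma u6_part_ofE ij : u6_part_of (u6_elt ij) = u6_part ij.
Proof.
rewrite /u6_part_of; case: pickP => [ij' /eqP /u6_elt_inj -> // | /(_ ij)].
by rewrite eqxx.
Qed.

Lemma card_u6_part q :
  #|[set x in ncg_vertices G | u6_part_of x == q]| = if q == ord0 then n.*2 else n.
Proof.
pose P (ij : 'I_(2 * n) * 'I_3) := (odd ij.1 || (ij.2 != 0 :> nat)) && (u6_part ij == q).
have -> : [set x in ncg_vertices G | u6_part_of x == q] = u6_elt @: [set ij | P ij].
  apply/setP => x; rewrite inE; apply/andP/imsetP => [[xV xq]|[ij]].
    have /u6_eltP[ij xE] := subsetP (subsetDl _ _) x xV.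
    by exists ij; rewrite // inE /P -u6_vertex -u6_part_ofE -xE xV.
  by rewrite inE => /andP[ijV ijq] ->; rewrite u6_vertex u6_part_ofE.
rewrite card_imset; last exact: u6_elt_inj.
transitivity (\sum_(i < 2 * n) \sum_(j < 3) (P (i, j) : nat))%N.
  rewrite pair_big -sum1_card big_mkcond; apply: eq_bigr => ij _.
  by rewrite inE -surjective_pairing; case: (P _).
rewrite (eq_bigr (fun i : 'I_(2 * n) => if odd i then (q != ord0 : nat) else (q == ord0).*2)).
  by rewrite sum_parity; case: eqP => _ /=; lia.
move=> i _; rewrite !big_ord_recl big_ord0 /P /u6_part /=.
by clear P; case: (odd i); case: q => [[|[|[|[|q]]]] ?].
Qed.

Lemma u6_ncommute_part :
  {in ncg_vertices G &, forall u v, (u * v != v * u) = (u6_part_of u != u6_part_of v)}.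
Proof.
move=> u v uV vV.
have /u6_eltP[ij uE] := subsetP (subsetDl _ _) u uV.
have /u6_eltP[kl vE] := subsetP (subsetDl _ _) v vV.
by move: uV vV; rewrite uE vE !u6_part_ofE => uV vV; rewrite u6_commute_part.
Qed.

Lemma u6_other_part :
  {in ncg_vertices G, forall u, exists2 w, w \in ncg_vertices G & u6_part_of w != u6_part_of u}.
Proof.
have one_mod : (1 %% (2 * n) = 1)%N by rewrite modn_small //; lia.
have aE : a = u6_elt (u6_index 1 0) by rewrite u6_eltE mulg1.
have bE : b = u6_elt (u6_index 0 1) by rewrite u6_eltE mul1g.
have pa : u6_part_of a = lift ord0 ord0.
  by rewrite aE u6_part_ofE /u6_part /= one_mod; apply: val_inj.
have pb : u6_part_of b = ord0 by rewrite bE u6_part_ofE /u6_part /= mod0n.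
move=> u _; have [pu|pu] := eqVneq (u6_part_of u) ord0.
  by exists a; rewrite ?pa ?pu // aE u6_vertex /= one_mod.
by exists b; rewrite ?pb 1?eq_sym // bE u6_vertex orbT.
Qed.

End U6n.

Lemma sqr_subX_factor (R : comNzRingType) (c d : R) :
  ('X - c%:P) ^+ 2 - (d ^+ 2)%:P = ('X - (c + d)%:P) * ('X - (c - d)%:P).
Proof. by rewrite rmorphD rmorphB rmorphXn /=; ring. Qed.

Theorem theorem5p1 (gT : finGroupType) (G : {group gT}) (a b : gT) (n : nat) :
  (1 <= n)%N ->
  G :=: <<[set a; b]>>%g ->
  (a ^+ (2 * n) = 1)%g ->
  (b ^+ 3 = 1)%g ->
  (a^-1 * b * a = b^-1)%g ->
  #|G| = (6 * n)%N ->
  char_poly (ncg_dist_mx G) =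
    ('X + 2%:P) ^+ (5 * n - 4) * ('X - (n%:R - 2 : algC)%:P) ^+ 2
    * ('X - ((4 * n)%:R - 2 + n%:R * sqrtC 6 : algC)%:P)
    * ('X - ((4 * n)%:R - 2 - n%:R * sqrtC 6 : algC)%:P).
Proof.
move=> n_gt0 defG a_order b_order conj_b_a cardG.
have gT_ge3 : (3 <= #|gT|)%N by rewrite (leq_trans _ (max_card G)) // cardG; lia.
pose p (i : 'I_#|ncg_vertices G|) := u6_part_of a b n (enum_val i).
rewrite (ncg_dist_mx_partition (u6_ncommute_part n_gt0 defG a_order b_order conj_b_a cardG)
  (u6_other_part n_gt0 defG a_order b_order conj_b_a cardG) gT_ge3) -/p.
have sizes q : part_size p q = if q == ord0 then n.*2 else n.
  by rewrite part_size_enum_val (card_u6_part n_gt0 defG a_order b_order conj_b_a cardG).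
have cardV : #|ncg_vertices G| = (5 * n)%N.
  by have := sum_part_size p; rewrite !big_ord_recl big_ord0 !sizes /=; lia.
rewrite (char_poly_multipartite_2111 _ n_gt0 sizes) cardV -!mulrA; congr (_ * (_ * _)).
by rewrite -sqr_subX_factor exprMn sqrtCK -natrX -natrM (mulnC 6).
Qed.
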